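(* There exists a disconnected biconvex bipartite graph that is not an induced subgraph of any connected biconvex bipartite graph.
   Context: A bipartite graph $G=(A\cup B,E)$ is biconvex if there are orderings of $A$ and of $B$ such that for every $a\in A$ the neighborhood $N(a)$ is a set of consecutive vertices in the ordering of $B$, and for every $b\in B$ the neighborhood $N(b)$ is a set of consecutive vertices in the ordering of $A$. *)

From mathcomp Require Import all_boot.
Set Implicit Arguments. Unset Strict Implicit. Unset Printing Implicit Defensive.

Definition badj (A B : finType) (E : A -> B -> bool) : rel (A + B)%type :=
  fun x y =>
    match x, y with
    | inl a, inr b => E a b
    | inr b, inl a => E a b
    | _, _ => false
    end.

(* S is a set of consecutive elements w.r.t. the linear order on T given by
   the injective ranking ord : T -> nat. *)
Definition consecutive (T : finType) (ord : T -> nat) (S : pred T) : Prop :=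
  forall x y z : T, S x -> S z -> ord x <= ord y <= ord z -> S y.

Definition biconvex (A B : finType) (E : A -> B -> bool) : Prop :=
  exists (ordA : A -> nat) (ordB : B -> nat),
    injective ordA /\ injective ordB /\
    (forall a : A, consecutive ordB (fun b => E a b)) /\
    (forall b : B, consecutive ordA (fun a => E a b)).

Definition bconnected (A B : finType) (E : A -> B -> bool) : Prop :=
  forall x y : (A + B)%type, connect (badj E) x y.

Definition induced_subgraph (A B : finType) (E : A -> B -> bool)
    (A' B' : finType) (E' : A' -> B' -> bool) : Prop :=
  exists f : (A + B)%type -> (A' + B')%type,
    injective f /\ forall x y, badj E' (f x) (f y) = badj E x y.

(* G is the 4-sunlet (the 4-cycle a0 b0 a1 b1 with a pendant vertex at each
   cycle vertex) plus a disjoint edge a4 b4.  Ranking one side of a biconvex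
   graph below the other makes every neighbourhood an interval of the ranking.

   If the neighbourhoods of c and d are intervals sharing a vertex a, with v
   private to c and w private to d, then, seen from any y adjacent to neither c
   nor d, both v and w lie beyond a; so every interval containing y and a
   contains v or w.

   Suppose G is induced in a connected biconvex graph H.  A walk in H from the
   edge a4 b4 to the sunlet leaves the set of vertices with no neighbour in the
   sunlet along a path x3 x2 x1, where x1 has a neighbour in the sunlet and x2,
   x3 do not.  Applied to the two cycle vertices on the side of x1, the interval
   N(x1) forces x1 to be adjacent to a pendant p.  Applied to the other two
   cycle vertices, the interval N(x2) u N(p) (both contain x1) joins x3 to the
   cycle neighbour of p, so it contains a pendant of one of them; but x2 has no
   neighbour in the sunlet and p none among the pendants. *)

From mathcomp Require Import all_boot zify.
Set Implicit Arguments. Unset Strict Implicit. Unset Printing Implicit Defensive.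

Definition between (i j k : nat) : bool := (i <= j <= k) || (k <= j <= i).

Lemma between_split i j k l : between i j l -> between i j k || between k j l.
Proof. rewrite /between; lia. Qed.

Lemma strict_between_of_nbetween i j k :
  ~~ between i j k -> ~~ between j i k -> (j < k < i) || (i < k < j).
Proof. rewrite /between; lia. Qed.

Lemma beyond_same_side y a v w :
  (y < a < v) || (v < a < y) -> (y < a < w) || (w < a < y) ->
  between a v w || between a w v.
Proof. rewrite /between; case: (leqP v w); lia. Qed.

Section Intervals.
Variables (T : Type) (rank : T -> nat).

Definition interval (S : pred T) : Prop :=
  forall x y z, S x -> S z -> between (rank x) (rank y) (rank z) -> S y.

Lemma interval_notin (S : pred T) x y z :
  interval S -> S x -> S z -> ~~ S y -> ~~ between (rank x) (rank y) (rank z).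
Proof. by move=> iS Sx Sz /negP nSy; apply/negP=> /(iS _ _ _ Sx Sz). Qed.

Lemma intervalU (I J : pred T) x :
  interval I -> interval J -> I x -> J x -> interval (fun z => I z || J z).
Proof.
move=> iI iJ Ix Jx p q r /orP[Ip|Jp] /orP[Ir|Jr] pqr.
- by rewrite (iI p q r).
- case/orP: (between_split (rank x) pqr) => [pqx|xqr].
  + by rewrite (iI p q x).
  + by rewrite (iJ x q r) ?orbT.
- case/orP: (between_split (rank x) pqr) => [pqx|xqr].
  + by rewrite (iJ p q x) ?orbT.
  + by rewrite (iI x q r).
- by rewrite (iJ p q r) ?orbT.
Qed.

Lemma interval_meets_private (Nc Nd S : pred T) a v w y :
  interval Nc -> interval Nd -> interval S ->
  Nc a -> Nd a -> Nc v -> ~~ Nd v -> Nd w -> ~~ Nc w -> ~~ Nc y -> ~~ Nd y ->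
  S y -> S a -> S v || S w.
Proof.
move=> iNc iNd iS Nca Nda Ncv Ndv Ndw Ncw Ncy Ndy Sy Sa.
apply/negPn/negP=> /norP[Sv Sw].
have v_beyond := strict_between_of_nbetween (interval_notin iNc Ncv Nca Ncy) (interval_notin iS Sy Sa Sv).
have w_beyond := strict_between_of_nbetween (interval_notin iNd Ndw Nda Ndy) (interval_notin iS Sy Sa Sw).
case/orP: (beyond_same_side v_beyond w_beyond); apply/negP.
- exact: interval_notin iNd Nda Ndw Ndv.
- exact: interval_notin iNc Nca Ncv Ncw.
Qed.

End Intervals.

Section IntervalGraph.
Variables (W : eqType) (adj : rel W) (rank : W -> nat).
Hypothesis adj_sym : symmetric adj.
Hypothesis adj_interval : forall x, interval rank (adj x).

Section SunletWithTail.
Variables (u0 u1 u2 u3 v0 v1 v2 v3 t x1 x2 x3 : W).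
Hypotheses (e01 : adj u0 u1) (e12 : adj u1 u2) (e23 : adj u2 u3) (e30 : adj u3 u0).
Hypotheses (p0 : adj u0 v0) (p1 : adj u1 v1) (p2 : adj u2 v2) (p3 : adj u3 v3).
Hypotheses (n02 : ~~ adj u0 v2) (n20 : ~~ adj u2 v0) (n13 : ~~ adj u1 v3) (n31 : ~~ adj u3 v1).
Hypotheses (n10 : ~~ adj v1 v0) (n12 : ~~ adj v1 v2) (n30 : ~~ adj v3 v0) (n32 : ~~ adj v3 v2).
Hypotheses (t_sunlet : t \in [:: u0; u2; v1; v3]) (t_x1 : adj t x1).
Hypotheses (x1_x2 : adj x1 x2) (x2_x3 : adj x2 x3).
Hypotheses (u1_x2 : ~~ adj u1 x2) (u3_x2 : ~~ adj u3 x2).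
Hypotheses (v0_x2 : ~~ adj v0 x2) (v2_x2 : ~~ adj v2 x2).
Hypotheses (u0_x3 : ~~ adj u0 x3) (u2_x3 : ~~ adj u2 x3).

Lemma sunlet_tail_adj_pendant : adj x1 v1 || adj x1 v3.
Proof.
have meets a : adj u1 a -> adj u3 a -> adj x1 a -> adj x1 v1 || adj x1 v3.
  move=> u1a u3a; apply: (interval_meets_private (@adj_interval u1) (@adj_interval u3)
    (@adj_interval x1) u1a u3a p1 n31 p3 n13 u1_x2 u3_x2 x1_x2).
have x1_t : adj x1 t by rewrite adj_sym.
move: t_sunlet x1_t; rewrite !inE => /or4P[] /eqP-> x1t; rewrite ?x1t ?orbT //.
- by apply: (meets u0); rewrite // adj_sym.
- by apply: (meets u2); rewrite // adj_sym.
Qed.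

Lemma no_sunlet_with_tail : False.
Proof.
have no_pendant p a : adj p a -> adj x1 p -> adj u0 a -> adj u2 a ->
    ~~ adj p v0 -> ~~ adj p v2 -> False.
  move=> pa x1p u0a u2a pv0 pv2.
  have S_interval : interval rank (fun z => adj x2 z || adj p z).
    by apply: (intervalU (x := x1)); rewrite // adj_sym.
  have := interval_meets_private (@adj_interval u0) (@adj_interval u2) S_interval
    u0a u2a p0 n20 p2 n02 u0_x3 u2_x3.
  rewrite x2_x3 pa orbT => /(_ isT isT).
  by rewrite !(adj_sym x2) (negbTE v0_x2) (negbTE v2_x2) (negbTE pv0) (negbTE pv2).
case/orP: sunlet_tail_adj_pendant => x1p.
- by apply: (no_pendant v1 u1); rewrite // adj_sym.
- by apply: (no_pendant v3 u3); rewrite // adj_sym.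
Qed.

End SunletWithTail.
End IntervalGraph.

Lemma badj_sym (A B : finType) (E : A -> B -> bool) : symmetric (badj E).
Proof. by case=> [a|b] [a'|b']. Qed.

Lemma consecutive_interval (T : finType) (ord : T -> nat) (S : pred T) :
  consecutive ord S -> interval ord S.
Proof. by move=> cS x y z Sx Sz /orP[]; [exact: cS | exact: cS Sz Sx]. Qed.

Lemma biconvex_interval_ordering (A B : finType) (E : A -> B -> bool) :
  biconvex E -> exists rank, forall x, interval rank (badj E x).
Proof.
case=> ordA [ordB [_ [_ [convA convB]]]].
pose M := \max_(a : A) (ordA a).+1.
have ltAM a : ordA a < M := leq_bigmax a.
exists (fun x => match x with inl a => ordA a | inr b => M + ordB b end).
have between_addl i j k : between (M + i) (M + j) (M + k) = between i j k.
  by rewrite /between !leq_add2l.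
have A_below a i j : ~~ between (M + i) (ordA a) (M + j).
  by have := ltAM a; rewrite /between; lia.
have B_above b i j : ~~ between (ordA i) (M + ordB b) (ordA j).
  by have := ltAM i; have := ltAM j; rewrite /between; lia.
case=> [a|b] [x|x] [y|y] [z|z] //= Nx Nz.
- by rewrite (negbTE (A_below _ _ _)).
- by rewrite between_addl; apply: consecutive_interval (convA a) _ _ _ Nx Nz.
- by apply: consecutive_interval (convB b) _ _ _ Nx Nz.
- by rewrite (negbTE (B_above _ _ _)).
Qed.

Lemma connect_exit2 (T : finType) (e : rel T) (P : pred T) x y z :
  e x y -> P x -> P y -> connect e y z -> ~~ P z ->
  exists x1 x2 x3, [/\ P x1, P x2, ~~ P x3, e x1 x2 & e x2 x3].
Proof.
move=> exy Px Py /connectP[p]; elim: p x y exy Px Py => [|c p IH] x y exy Px Py /=.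
  by move=> _ -> /negP.
case/andP=> eyc pc last_z nPz; have [Pc|nPc] := boolP (P c).
  exact: IH eyc Py Pc pc last_z nPz.
by exists x, y, c.
Qed.

Definition sunlet_K2 (i j : 'I_5) : bool :=
  (val i, val j) \in
    [:: (0, 0); (0, 1); (1, 0); (1, 1); (0, 2); (1, 3); (2, 0); (3, 1); (4, 4)].

Notation "''a_' i" := (@inl 'I_5 'I_5 (@Ordinal 5 i isT))
  (at level 0, i at level 2, format "''a_' i").
Notation "''b_' i" := (@inr 'I_5 'I_5 (@Ordinal 5 i isT))
  (at level 0, i at level 2, format "''b_' i").

Definition sunlet : seq ('I_5 + 'I_5) :=
  [:: 'a_0; 'a_1; 'a_2; 'a_3; 'b_0; 'b_1; 'b_2; 'b_3].

(* Both sides in the order: pendant, cycle, cycle, pendant, edge a4 b4. *)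
Definition sunlet_rank (i : 'I_5) : nat := nth 0 [:: 1; 2; 0; 3; 4] i.

Lemma sunlet_rank_inj : injective sunlet_rank.
Proof. by move=> [[|[|[|[|[|?]]]]] ?] [[|[|[|[|[|?]]]]] ?] //= _; apply/val_inj. Qed.

Lemma sunlet_K2_biconvex : biconvex sunlet_K2.
Proof.
exists sunlet_rank, sunlet_rank.
split; first exact: sunlet_rank_inj; split; first exact: sunlet_rank_inj.
split.
  by move=> [[|[|[|[|[|?]]]]] ?] [[|[|[|[|[|?]]]]] ?] [[|[|[|[|[|?]]]]] ?] [[|[|[|[|[|?]]]]] ?].
by move=> [[|[|[|[|[|?]]]]] ?] [[|[|[|[|[|?]]]]] ?] [[|[|[|[|[|?]]]]] ?] [[|[|[|[|[|?]]]]] ?].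
Qed.

Lemma sunlet_closed : closed (badj sunlet_K2) sunlet.
Proof. by case=> -[[|[|[|[|[|?]]]]] ?] [] [[|[|[|[|[|?]]]]] ?]. Qed.

Lemma sunlet_K2_disconnected : ~ bconnected sunlet_K2.
Proof. by move=> /(_ 'a_0 'a_4) /(closed_connect sunlet_closed). Qed.

Section Embedding.
Variables (W : finType) (adj : rel W) (rank : W -> nat) (f : 'I_5 + 'I_5 -> W).
Hypothesis adj_sym : symmetric adj.
Hypothesis adj_interval : forall x, interval rank (adj x).
Hypothesis f_adj : forall x y, adj (f x) (f y) = badj sunlet_K2 x y.
Hypothesis adj_connected : forall x y, connect adj x y.

Definition touches_sunlet x := [exists k, (k \in sunlet) && adj (f k) x].

Lemma untouched_nonadj x k : ~~ touches_sunlet x -> k \in sunlet -> ~~ adj (f k) x.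
Proof. by move=> /existsPn/(_ k); rewrite negb_and => /orP[/negP|]. Qed.

Lemma untouched_off_sunlet w : w \notin sunlet -> ~~ touches_sunlet (f w).
Proof.
move=> w_off; apply/existsPn=> k; rewrite f_adj; apply/nandP.
have [k_in|] := boolP (k \in sunlet); [right | by left].
by apply/negP=> /sunlet_closed; rewrite k_in (negbTE w_off).
Qed.

Lemma sunlet_tail_not_embedded k x1 x2 x3 :
  k \in sunlet -> adj (f k) x1 -> adj x1 x2 -> adj x2 x3 ->
  ~~ touches_sunlet x2 -> ~~ touches_sunlet x3 -> False.
Proof.
move=> k_in k_x1 x1_x2 x2_x3 far2 far3.
have /orP[k_side|k_side] :
    (k \in [:: 'a_0; 'a_1; 'a_2; 'a_3]) || (k \in [:: 'b_0; 'b_1; 'b_2; 'b_3]).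
  by rewrite -mem_cat.
- apply: (no_sunlet_with_tail adj_sym adj_interval (t := f k) (x1 := x1) (x2 := x2) (x3 := x3)
    (u0 := f 'a_0) (u1 := f 'b_0) (u2 := f 'a_1) (u3 := f 'b_1)
    (v0 := f 'b_2) (v1 := f 'a_2) (v2 := f 'b_3) (v3 := f 'a_3));
    first [by rewrite f_adj | by apply: untouched_nonadj | exact: (map_f f k_side) | done].
- apply: (no_sunlet_with_tail adj_sym adj_interval (t := f k) (x1 := x1) (x2 := x2) (x3 := x3)
    (u0 := f 'b_0) (u1 := f 'a_0) (u2 := f 'b_1) (u3 := f 'a_1)
    (v0 := f 'a_2) (v1 := f 'b_2) (v2 := f 'a_3) (v3 := f 'b_3));
    first [by rewrite f_adj | by apply: untouched_nonadj | exact: (map_f f k_side) | done].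
Qed.

Lemma no_sunlet_K2_embedding : False.
Proof.
have edge4 : adj (f 'b_4) (f 'a_4) by rewrite f_adj.
have touched_a0 : touches_sunlet (f 'a_0) by apply/existsP; exists 'b_0; rewrite f_adj.
have [x3 [x2 [x1 [far3 far2 /negPn near1 e32 e21]]]] :=
  connect_exit2 (P := [pred x | ~~ touches_sunlet x]) edge4
    (untouched_off_sunlet (w := 'b_4) isT) (untouched_off_sunlet (w := 'a_4) isT)
    (adj_connected _ (f 'a_0)) (introT negPn touched_a0).
have /existsP[k /andP[k_in k_x1]] := near1.
by apply: (sunlet_tail_not_embedded k_in k_x1 _ _ far2 far3); rewrite adj_sym.
Qed.

End Embedding.

Theorem proposition1 :
  exists (A B : finType) (E : A -> B -> bool),
    biconvex E /\ ~ bconnected E /\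
    forall (A' B' : finType) (E' : A' -> B' -> bool),
      biconvex E' -> bconnected E' -> ~ induced_subgraph E E'.
Proof.
exists 'I_5, 'I_5, sunlet_K2; split; first exact: sunlet_K2_biconvex.
split; first exact: sunlet_K2_disconnected.
move=> A' B' E' /biconvex_interval_ordering[rank adj_interval] connected [f [_ f_adj]].
exact: no_sunlet_K2_embedding (badj_sym E') adj_interval f_adj connected.
Qed.
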